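(* Let $z=(z^+,z^-)$ be a bi-sequence of $n$ nonnegative integers, and let $f_z(a)=\sum_i|z_i^+-a_i^+|+\sum_i|z_i^--a_i^-|$. Let $d\in B_n$ satisfy $f_z(d)=\min_{a\in B_n}f_z(a)$. (1) There exists $d_*\in B_n$ with $d_{*i}^+\le z_i^+$ for all $i$ and $f_z(d_* )=f_z(d)$. (2) There exists $d_*\in B_n$ with $d_{*i}^-\le z_i^-$ for all $i$ and $f_z(d_* )=f_z(d)$.
   Context: $B_n$ is the set of all bi-degree sequences $a=(a^+,a^-)$ (out-degrees $a_i^+$, in-degrees $a_i^-$) of simple directed graphs (no loops, no multiple edges) on nodes $\{1,\dots,n\}$. *)

From mathcomp Require Import all_boot.
Set Implicit Arguments. Unset Strict Implicit. Unset Printing Implicit Defensive.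

(* A bi-sequence on n nodes: (out-sequence a^+, in-sequence a^-). *)
Definition biseq (n : nat) : Type := (('I_n -> nat) * ('I_n -> nat))%type.

(* Simple directed graph on 'I_n: a relation without loops (a relation
   automatically has no multiple edges; opposite arcs are allowed). *)
Definition is_digraph (n : nat) (g : rel 'I_n) : Prop := forall i, ~~ g i i.

Definition outdeg n (g : rel 'I_n) (i : 'I_n) : nat := #|[set j | g i j]|.
Definition indeg n (g : rel 'I_n) (i : 'I_n) : nat := #|[set j | g j i]|.

Definition in_Bn (n : nat) (a : biseq n) : Prop :=
  exists g : rel 'I_n, is_digraph g /\
    (forall i, a.1 i = outdeg g i) /\ (forall i, a.2 i = indeg g i).

Definition natdist (m k : nat) : nat := (m - k) + (k - m).

Definition fz (n : nat) (z a : biseq n) : nat :=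
  \sum_(i < n) natdist (z.1 i) (a.1 i) + \sum_(i < n) natdist (z.2 i) (a.2 i).

(* Deleting an arc i -> j at a vertex whose out-degree exceeds z_i^+ lowers
   the out-part of f_z by one and raises the in-part by at most one, so f_z
   does not increase.  Repeating this until no out-degree exceeds its target
   turns a graph realizing d into one realizing the required d_*, and by
   minimality of d the value of f_z is unchanged.  Reversing all arcs swaps
   out- and in-degrees, which gives the second assertion. *)

From mathcomp Require Import all_boot.
From mathcomp Require Import zify.
Set Implicit Arguments. Unset Strict Implicit. Unset Printing Implicit Defensive.

Lemma eq_sum_bump n (F G : 'I_n -> nat) (i : 'I_n) :
  (forall x, F x = G x + (x == i)) -> \sum_(x < n) F x = \sum_(x < n) G x + 1.
Proof.
move=> FG; rewrite (eq_bigr _ (fun x _ => FG x)) big_split /=; congr (_ + _).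
by rewrite (bigD1 i) //= eqxx big1 // => x /negbTE ->.
Qed.

Lemma leq_sum_bump n (F G : 'I_n -> nat) (i : 'I_n) :
  (forall x, F x <= G x + (x == i)) -> \sum_(x < n) F x <= \sum_(x < n) G x + 1.
Proof.
move=> FG; rewrite -(@eq_sum_bump _ (fun x => G x + (x == i)) _ i) //.
exact: leq_sum.
Qed.

Definition degs n (g : rel 'I_n) : biseq n := (outdeg g, indeg g).

Lemma in_Bn_degs n (g : rel 'I_n) : is_digraph g -> in_Bn (degs g).
Proof. by move=> dg; exists g. Qed.

Lemma in_Bn_fz n (z d : biseq n) :
  in_Bn d -> exists2 g : rel 'I_n, is_digraph g & fz z (degs g) = fz z d.
Proof.
move=> [g [dg [dout din]]]; exists g => //.
by rewrite /fz; congr (_ + _); apply: eq_bigr => x _; rewrite ?dout ?din.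
Qed.

Definition transpose n (g : rel 'I_n) : rel 'I_n := fun x y => g y x.

Lemma is_digraph_transpose n (g : rel 'I_n) :
  is_digraph g -> is_digraph (transpose g).
Proof. by []. Qed.

Lemma fz_transpose n (z : biseq n) (g : rel 'I_n) :
  fz z (degs (transpose g)) = fz (z.2, z.1) (degs g).
Proof. exact: addnC. Qed.

Definition delarc n (g : rel 'I_n) (i j : 'I_n) : rel 'I_n :=
  fun x y => g x y && ((x, y) != (i, j)).

Lemma is_digraph_delarc n (g : rel 'I_n) i j :
  is_digraph g -> is_digraph (delarc g i j).
Proof. by move=> dg x; rewrite /delarc negb_and dg. Qed.

Section DeleteArc.

Variables (n : nat) (g : rel 'I_n) (i j : 'I_n).
Hypothesis gij : g i j.

Lemma outdeg_delarc x : outdeg g x = outdeg (delarc g i j) x + (x == i).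
Proof.
rewrite /outdeg /delarc; case: eqP => [->|/eqP ne].
  rewrite (cardsD1 j [set y | g i y]) inE gij addnC; congr (_ + _).
  by apply: eq_card => y; rewrite !inE xpair_eqE eqxx andbC.
rewrite addn0; apply: eq_card => y.
by rewrite !inE xpair_eqE (negbTE ne) andbT.
Qed.

Lemma indeg_delarc y : indeg g y = indeg (delarc g i j) y + (y == j).
Proof.
rewrite /indeg /delarc; case: eqP => [->|/eqP ne].
  rewrite (cardsD1 i [set x | g x j]) inE gij addnC; congr (_ + _).
  by apply: eq_card => x; rewrite !inE xpair_eqE eqxx andbT andbC.
rewrite addn0; apply: eq_card => x.
by rewrite !inE xpair_eqE (negbTE ne) andbF andbT.
Qed.

Variable z : biseq n.
Hypothesis outdeg_gt : z.1 i < outdeg g i.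

Lemma out_excess_delarc :
  \sum_(x < n) (outdeg g x - z.1 x)
    = \sum_(x < n) (outdeg (delarc g i j) x - z.1 x) + 1.
Proof.
apply: (@eq_sum_bump _ _ _ i) => x; have := outdeg_delarc x.
by case: (x =P i) => [->|_] /=; lia.
Qed.

Lemma fz_delarc : fz z (degs (delarc g i j)) <= fz z (degs g).
Proof.
have out_dist : \sum_(x < n) natdist (z.1 x) (outdeg g x)
    = \sum_(x < n) natdist (z.1 x) (outdeg (delarc g i j) x) + 1.
  apply: (@eq_sum_bump _ _ _ i) => x; have := outdeg_delarc x; rewrite /natdist.
  by case: (x =P i) => [->|_] /=; lia.
have in_dist : \sum_(y < n) natdist (z.2 y) (indeg (delarc g i j) y)
    <= \sum_(y < n) natdist (z.2 y) (indeg g y) + 1.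
  apply: (@leq_sum_bump _ _ _ j) => y; have := indeg_delarc y; rewrite /natdist.
  by case: (y =P j) => [->|_] /=; lia.
by rewrite /fz /= out_dist addnAC -addnA leq_add2l.
Qed.

End DeleteArc.

Lemma exists_outdeg_le_fz_le n (z : biseq n) (g : rel 'I_n) :
  is_digraph g -> exists2 h : rel 'I_n, is_digraph h &
    (forall x, outdeg h x <= z.1 x) /\ fz z (degs h) <= fz z (degs g).
Proof.
have [k] := ubnP (\sum_(x < n) (outdeg g x - z.1 x)).
elim: k g => // k IH g excess_lt dg.
have [i /= outdeg_gt|outdeg_le] :=
  pickP (fun x => z.1 x < outdeg g x); last first.
  by exists g => //; split => // x; rewrite leqNgt outdeg_le.
have /card_gt0P [j] : 0 < outdeg g i := leq_ltn_trans (leq0n _) outdeg_gt.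
rewrite inE => gij.
have [|h dh [h_le h_fz]] := IH (delarc g i j) _ (is_digraph_delarc i j dg).
  by move: excess_lt; rewrite (out_excess_delarc gij outdeg_gt) addn1.
by exists h => //; split => //; apply: leq_trans h_fz (fz_delarc _ _).
Qed.

Lemma exists_indeg_le_fz_le n (z : biseq n) (g : rel 'I_n) :
  is_digraph g -> exists2 h : rel 'I_n, is_digraph h &
    (forall x, indeg h x <= z.2 x) /\ fz z (degs h) <= fz z (degs g).
Proof.
move=> /is_digraph_transpose /(exists_outdeg_le_fz_le (z.2, z.1)).
case=> h dh [h_le h_fz]; exists (transpose h); first exact: is_digraph_transpose.
by split => //; rewrite fz_transpose; move: h_fz; rewrite fz_transpose.
Qed.

Theorem proposition4 (n : nat) (z d : biseq n) :
  in_Bn d ->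
  (forall a : biseq n, in_Bn a -> fz z d <= fz z a) ->
  (exists ds : biseq n, in_Bn ds /\ (forall i, ds.1 i <= z.1 i) /\ fz z ds = fz z d) /\
  (exists ds : biseq n, in_Bn ds /\ (forall i, ds.2 i <= z.2 i) /\ fz z ds = fz z d).
Proof.
move=> /(in_Bn_fz z) [g dg fz_g] d_min.
have optimal h : is_digraph h -> fz z (degs h) <= fz z (degs g) ->
    fz z (degs h) = fz z d.
  move=> dh le_g; apply/eqP; rewrite eqn_leq -{1}fz_g le_g.
  exact/d_min/in_Bn_degs.
split.
- have [h dh [h_le h_fz]] := exists_outdeg_le_fz_le z dg.
  by exists (degs h); split; [exact: in_Bn_degs | split; last exact: optimal].
- have [h dh [h_le h_fz]] := exists_indeg_le_fz_le z dg.
  by exists (degs h); split; [exact: in_Bn_degs | split; last exact: optimal].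
Qed.
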